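(* In the marked Hawkes model described in the context (with $\kappa<1$), if $X=f(A)\in\mathrm{MDA}(G)$, then the maximal claim size $H$ in one cluster also belongs to $\mathrm{MDA}(G)$.
   Context: $G$ is one of the three extreme value distributions, $\mathbb E=\{y:G(y)>0\}$; a real random variable $X$ belongs to $\mathrm{MDA}(G)$ if there exist $a_n>0,b_n\in\mathbb R$ with $n\,\mathbb P(X>a_nx+b_n)\to-\log G(x)$ for all $x\in\mathbb E$. Marked Hawkes model (cluster representation): $\mathbb S$ is a Polish space, $Q$ a probability on $\mathbb S$, $f:\mathbb S\to\mathbb R_+$ measurable, $\nu>0$, and $h:[0,\infty)\times\mathbb S\to\mathbb R_+$ measurable with $\kappa_a=\int_0^\infty h(s,a)\,ds$ and $\kappa=\mathbb E[\kappa_A]<1$, $A\sim Q$. The immigrants $(\Gamma_i,A_i)$ form a Poisson process on $[0,\infty)\times\mathbb S$ with mean measure $\nu\,ds\times Q$. Each immigrant generates a cluster: it contains the point $(\Gamma_i,A_i)$; recursively, given a point of the cluster at time $s$ with mark $a$, its direct offspring form (conditionally on all previous generations, independently over points) a Poisson process on $[s,\infty)\times\mathbb S$ with mean measure $h(u-s,a)\,du\times Q(db)$; the cluster consists of all points of all generations, and $K+1$ denotes its (a.s. finite) total number of points. All marks are i.i.d. with law $Q$. The maximal claim size in one cluster is $H=\max\{f(b):(u,b)\text{ a point of the cluster}\}$, and $X=f(A)$, $A\sim Q$. *)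

From HB Require Import structures.
From mathcomp Require Import all_boot all_order all_algebra.
From mathcomp Require Import all_classical all_reals all_analysis.
Set Implicit Arguments. Unset Strict Implicit. Unset Printing Implicit Defensive.
Import Order.TTheory GRing.Theory Num.Theory.
Import numFieldNormedType.Exports.
Local Open Scope classical_set_scope.
Local Open Scope ring_scope.

Section Defs.
Context {R : realType}.

Definition frechet (alpha : R) (x : R) : R :=
  if x <= 0 then 0 else expR (- (x `^ (- alpha))).
Definition weibull (alpha : R) (x : R) : R :=
  if x < 0 then expR (- ((- x) `^ alpha)) else 1.
Definition gumbel (x : R) : R := expR (- expR (- x)).

Definition is_EVD (G : R -> R) : Prop :=
  (exists2 alpha, 0 < alpha & G = frechet alpha) \/
  (exists2 alpha, 0 < alpha & G = weibull alpha) \/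
  G = gumbel.

Definition EVD_support (G : R -> R) : set R := [set y | 0 < G y].

Definition in_MDA {d} {T : measurableType d} (mu : probability T R)
  (X : T -> \bar R) (G : R -> R) : Prop :=
  exists a b : nat -> R, (forall n, 0 < a n) /\
    forall x, EVD_support G x ->
      (fun n : nat => n%:R * fine (mu [set w | ((a n * x + b n)%:E < X w)%E]))
        @ \oo --> - ln (G x).

Definition kappa {dS} {S : measurableType dS} (h : R * S -> R) (a : S) : \bar R :=
  (\int[lebesgue_measure]_(s in `[0%R, +oo[) (h (s, a))%:E)%E.

(* Ulam--Harris labels: [::] is the immigrant, (i :: v) is the i-th direct
   offspring of v.  Given offspring numbers N, [alive N w u] says that the
   label u belongs to the cluster. *)
Fixpoint alive {T : Type} (N : seq nat -> T -> nat) (w : T) (u : seq nat) : bool :=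
  if u is i :: v then alive N w v && (i < N v w)%N else true.

Definition mark_offspring_law {dS} {S : measurableType dS} (Q : probability S R)
  (h : R * S -> R) (B : set S) (k : nat) : \bar R :=
  (\int[Q]_(a in B)
     (expR (- fine (kappa h a)) * (fine (kappa h a)) ^+ k / (k`!)%:R)%:E)%E.

(* The family (M u, N u)_{u : seq nat} is i.i.d. with the above joint law:
   for every finite family of distinct labels the joint law on rectangles
   factorises (mutual independence + identical law). *)
Definition iid_cluster_family {d} {T : measurableType d} (P : probability T R)
  {dS} {S : measurableType dS} (Q : probability S R) (h : R * S -> R)
  (M : seq nat -> T -> S) (N : seq nat -> T -> nat) : Prop :=
  forall (us : seq (seq nat)) (B : seq nat -> set S) (k : seq nat -> nat),
    uniq us -> (forall u, measurable (B u)) ->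
    P (\bigcap_(u in [set u | u \in us]) [set w | B u (M u w) /\ N u w = k u])
    = (\prod_(u <- us) mark_offspring_law Q h (B u) (k u))%E.

Definition cluster_max {T : Type} {S : Type} (f : S -> R)
  (M : seq nat -> T -> S) (N : seq nat -> T -> nat) (w : T) : \bar R :=
  ereal_sup [set (f (M u w))%:E | u in [set u | alive N w u]].

End Defs.

(* Label the points of a cluster by Ulam-Harris words.  The point [u] exists
   iff every ancestor on the path to [u] has more offspring than the next letter
   of [u]; by independence, [P(u exists, f(mark of u) > t) = P(X > t) * prod_j
   P(N > u_j)], where [N] is the offspring number of one point.  Summing over
   all words gives [P(H > t) <= P(X > t) / (1 - m)] with [m = sum_i P(N > i)
   = E N < 1].  Conversely, a Bonferroni inequality over the finitely many words
   of length and letters below [D] gives [P(H > t) >= s_D P(X > t) - C_D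
   P(X > t)^2] with [s_D --> 1 / (1 - m)].  Hence [n P(H > a_n x + b_n)] tends
   to [- ln G(x) / (1 - m)], and max-stability of [G] absorbs the factor
   [1 / (1 - m)] into an affine change of the normalising constants. *)

From HB Require Import structures.
From mathcomp Require Import all_boot all_order all_algebra.
From mathcomp Require Import all_classical all_reals all_analysis.
From mathcomp Require Import measurable_realfun ring lra.
Import Order.TTheory GRing.Theory Num.Theory.
Import numFieldNormedType.Exports.
Local Open Scope classical_set_scope.
Local Open Scope ring_scope.

Section poisson_series.
Context {R : realType}.
Local Open Scope ereal_scope.

Lemma nneseries_poisson (r : R) : (0 <= r)%R ->
  \sum_(k <oo) (expR (- r) * r ^+ k / k`!%:R)%:E = 1.
Proof.
move=> r0; under eq_eseriesr do rewrite -mulrA EFinM.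
rewrite nneseriesZl; last by move=> k _; rewrite lee_fin divr_ge0 // exprn_ge0.
rewrite [X in _ * X](_ : _ = (expR r)%:E) -?EFinM -?expRD ?addNr ?expR0 //.
rewrite expRE -EFin_lim; last first.
  rewrite /pseries/=; under eq_fun do rewrite mulrC.
  exact: is_cvg_series_exp_coeff.
apply/congr_lim/funext => n /=; rewrite /pseries/= /series/= -sumEFin.
by under eq_bigr do rewrite mulrC.
Qed.

Lemma nneseries_poisson_mean (r : R) : (0 <= r)%R ->
  \sum_(k <oo) (k%:R * (expR (- r) * r ^+ k / k`!%:R))%:E = r%:E.
Proof.
move=> r0; rewrite nneseries_recl // => [|k _]; last first.
  by rewrite lee_fin !mulr_ge0 // ?expR_ge0 ?exprn_ge0.
rewrite mul0r add0e -nneseries_addn => [|k]; last first.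
  by rewrite lee_fin !mulr_ge0 // ?expR_ge0 ?exprn_ge0.
rewrite -(mule1 r%:E) -(nneseries_poisson _ r0) -nneseriesZl => [|k _]; last first.
  by rewrite lee_fin divr_ge0 // mulr_ge0 ?expR_ge0 ?exprn_ge0.
apply: eq_eseriesr => k _; rewrite addn1 -EFinM factS natrM exprS; congr EFin.
by field; rewrite nat1r !pnatr_eq0 -lt0n fact_gt0.
Qed.

Lemma nneseries_ltn_cst (k : nat) (c : R) : (0 <= c)%R ->
  \sum_(i <oo) ((if (i < k)%N then c else 0%R)%:E) = (k%:R * c)%:E.
Proof.
move=> c0; rewrite (nneseries_split 0 k) => [|i _]; last by case: ifP.
rewrite add0n eseries0 ?adde0 => [|i ki _]; last by rewrite ltnNge ki.
rewrite sumEFin big_mkord (eq_bigr (fun _ => c)) => [|i _]; last by rewrite ltn_ord.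
by rewrite sumr_const card_ord mulr_natl.
Qed.

End poisson_series.

Section real_sequences.
Context {R : realType}.

Lemma cvg0_natmul (q : nat -> R) (L : R) :
  (fun n => n%:R * q n) @ \oo --> L -> q @ \oo --> 0.
Proof.
move=> qL; rewrite -cvg_shiftS /=.
have -> : (fun n => q n.+1) = (fun n => (n.+1%:R * q n.+1) * harmonic n).
  by apply/funext => n; rewrite /harmonic /= mulrAC mulfV ?mul1r.
have qL' : (fun n => n.+1%:R * q n.+1) @ \oo --> L by move: qL; rewrite -cvg_shiftS.
by have := cvgM qL' (@cvg_harmonic R); rewrite mulr0; apply.
Qed.

(* Fix [D] with [s D] close to [c]; for this [D] the error [C D * q n ^+ 2] is
   negligible against [q n] because [q n --> 0]. *)
Lemma cvg_natmul_squeeze (q p s C : nat -> R) (c L : R) :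
  (forall n, 0 <= q n) ->
  (forall n, p n <= c * q n) ->
  (forall D n, s D * q n - C D * q n ^+ 2 <= p n) ->
  s @ \oo --> c ->
  (fun n => n%:R * q n) @ \oo --> L ->
  (fun n => n%:R * p n) @ \oo --> c * L.
Proof.
move=> q0 pup plo sc qL; apply/cvgrPdist_le => eps eps0.
pose K := `|c| + 2 * (`|L| + 1).
have K0 : 0 < K by rewrite ltr_wpDl // mulr_gt0 // ltr_wpDl.
pose del := Num.min 1 (eps / K).
have del0 : 0 < del by rewrite lt_min ltr01 divr_gt0.
have del1 : del <= 1 by rewrite ge_min lexx.
have delK : del * K <= eps by rewrite -ler_pdivlMr // ge_min lexx orbT.
have [D _ /(_ D (leqnn D)) sD] := (cvgrPdist_le _ _).1 sc del del0.
have Cq : (fun n => C D * q n) @ \oo --> 0.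
  by rewrite -(mulr0 (C D)); apply: cvgM; [exact: cvg_cst|exact: cvg0_natmul qL].
near=> n.
have hx : `|L - n%:R * q n| <= del by near: n; exact: (cvgrPdist_le _ _).1 qL _ del0.
have hC : `|C D * q n| <= del.
  by rewrite -normrN -sub0r; near: n; exact: (cvgrPdist_le _ _).1 Cq _ del0.
set x := n%:R * q n in hx *.
have up : n%:R * p n <= c * x by rewrite /x mulrCA ler_wpM2l.
have lo : s D * x - C D * q n * x <= n%:R * p n.
  rewrite /x (_ : _ - _ = n%:R * (s D * q n - C D * q n ^+ 2)); last by ring.
  exact: ler_wpM2l.
have xL : `|x| <= `|L| + 1.
  by have := lerB_dist x L; rewrite distrC => ?; lra.
have e1 : `|c * x - c * L| <= `|c| * del.
  by rewrite -mulrBr normrM ler_wpM2l // distrC.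
have e2 : `|s D * x - c * x| <= del * (`|L| + 1).
  by rewrite -mulrBl normrM ler_pM // distrC.
have e3 : `|C D * q n * x| <= del * (`|L| + 1) by rewrite normrM ler_pM.
have eK : del * K = `|c| * del + 2 * (del * (`|L| + 1)) by rewrite /K; ring.
move: e1 e2 e3; rewrite !ler_norml => /andP[? ?] /andP[? ?] /andP[? ?].
apply/andP; split; lra.
Unshelve. all: end_near.
Qed.

Lemma cvg_nneseries_partial (t : nat -> R) (m : R) : (forall i, 0 <= t i) ->
  (\sum_(i <oo) (t i)%:E = m%:E)%E -> (fun n => \sum_(0 <= i < n) t i) @ \oo --> m.
Proof.
move=> t_ge0 tm; have : (fun n => (\sum_(0 <= i < n) t i)%:E) @ \oo --> m%:E.
  rewrite -tm; under eq_fun do rewrite -sumEFin.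
  by apply: is_cvg_nneseries => i _ _; rewrite lee_fin.
exact: fine_cvg.
Qed.

Lemma partial_le_nneseries (t : nat -> R) (m : R) n : (forall i, 0 <= t i) ->
  (\sum_(i <oo) (t i)%:E = m%:E)%E -> \sum_(0 <= i < n) t i <= m.
Proof.
move=> t_ge0 tm; rewrite -lee_fin -tm -sumEFin.
by apply: nneseries_lim_ge => i _ _; rewrite lee_fin.
Qed.

Lemma nneseries_geometric (q m : R) : 0 <= m -> m < 1 ->
  (\sum_(n <oo) (q * m ^+ n)%:E = (q / (1 - m))%:E)%E.
Proof.
move=> m0 m1; have m_lt1 : `|m| < 1 by rewrite ger0_norm.
rewrite (_ : (fun n => _) = EFin \o series (geometric q m)); last first.
  by apply/funext => n; rewrite /series /= sumEFin.
rewrite EFin_lim; last exact: is_cvg_geometric_series.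
by rewrite (cvg_lim _ (@cvg_geometric_series _ q _ m_lt1)).
Qed.

Lemma cvg_sum_exprn_diag (x : nat -> R) (m : R) :
  (forall n, 0 <= x n <= m) -> m < 1 -> x @ \oo --> m ->
  (fun n => \sum_(k < n) x n ^+ k) @ \oo --> (1 - m)^-1.
Proof.
move=> x0m m1 xm; have x1 n : x n < 1 by case/andP: (x0m n) => _ /le_lt_trans->.
have -> : (fun n => \sum_(k < n) x n ^+ k) = (fun n => (1 - x n ^+ n) / (1 - x n)).
  apply/funext => n; rewrite -opprB subrX1 -mulNr opprB mulrAC divff ?mul1r //.
  by rewrite subr_eq0 eq_sym lt_eqF.
rewrite -[X in _ --> X]mul1r; apply: cvgM; last first.
  apply: cvgV; first by rewrite subr_eq0 eq_sym lt_eqF.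
  exact: cvgB (cvg_cst _) xm.
rewrite -[X in _ --> X]subr0; apply: cvgB (cvg_cst _) _.
have m0 : 0 <= m by case/andP: (x0m 0%N) => /le_trans; apply.
apply: (@squeeze_cvgr _ _ _ _ (fun _ => 0) (fun n => m ^+ n)); last 2 first.
- exact: cvg_cst.
- by apply: cvg_expr; rewrite ger0_norm.
near=> n; have /andP[x0 xm'] := x0m n.
by rewrite exprn_ge0 //= lerXn2r ?nnegrE.
Unshelve. all: end_near.
Qed.

End real_sequences.

Lemma EVD_max_stable {R : realType} (G : R -> R) (c : R) : is_EVD G -> 0 < c ->
  exists al be, 0 < al /\ forall x, EVD_support G x ->
    EVD_support G (al * x + be) /\ c * (- ln (G (al * x + be))) = - ln (G x).
Proof.
move=> [[a a0 ->]|[[a a0 ->]|->]] c0.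
- exists (c `^ a^-1), 0; split => [|x]; first by rewrite powR_gt0.
  rewrite /EVD_support /frechet /= addr0; case: ifPn; first by rewrite ltxx.
  rewrite -ltNge => x0 _.
  have y0 : 0 < c `^ a^-1 * x by rewrite mulr_gt0 // powR_gt0.
  rewrite leNgt y0 /= !expRK !opprK; split; first exact: expR_gt0.
  rewrite powRM ?ltW ?powR_gt0 // -powRrM mulrN mulVf ?gt_eqF // powR_inv1 ?ltW //.
  by rewrite mulrA mulfV ?gt_eqF // mul1r.
- exists (c `^ (- a^-1)), 0; split => [|x _]; first by rewrite powR_gt0.
  rewrite /EVD_support /weibull /= addr0.
  have al0 : 0 < c `^ (- a^-1) by rewrite powR_gt0.
  case: (ltP x 0) => x0; last first.
    have y0 : ~~ (c `^ (- a^-1) * x < 0) by rewrite -leNgt mulr_ge0 // ltW.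
    by rewrite (negbTE y0) ln1 oppr0 mulr0 ltr01.
  rewrite pmulr_rlt0 // x0 !expRK !opprK; split; first exact: expR_gt0.
  rewrite -mulrN powRM ?ltW ?oppr_gt0 // -powRrM mulNr mulVf ?gt_eqF // powR_inv1 ?ltW //.
  by rewrite mulrA mulfV ?gt_eqF // mul1r.
- exists 1, (ln c); split => // x _; rewrite /EVD_support /gumbel.
  split; first exact: expR_gt0.
  rewrite !expRK !opprK mul1r opprD expRD (expRN (ln c)) lnK ?posrE //.
  by rewrite mulrCA mulfV ?gt_eqF // mulr1.
Qed.

Section fine_measure.
Context {d : measure_display} {T : measurableType d} {R : realType}.
Variable P : probability T R.

Lemma fine_measure_le (X Y : set T) : measurable X -> measurable Y -> X `<=` Y ->
  fine (P X) <= fine (P Y).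
Proof. by move=> mX mY XY; rewrite fine_le ?fin_num_measure // le_measure ?inE. Qed.

Lemma fine_measureU (X Y : set T) : measurable X -> measurable Y ->
  fine (P (X `|` Y)) = fine (P X) + fine (P Y) - fine (P (X `&` Y)).
Proof.
move=> mX mY; rewrite measureUfinl // ?ltey_eq ?fin_num_measure //.
by rewrite fineB ?fineD ?fin_numD ?fin_num_measure //; exact: measurableI.
Qed.

Lemma fine_measureI_bigsetU_le (I : eqType) (X : set T) (us : seq I) (A : I -> set T) e :
  measurable X -> (forall u, measurable (A u)) ->
  {in us, forall v, fine (P (X `&` A v)) <= e} ->
  fine (P (X `&` \big[setU/set0]_(v <- us) A v)) <= (size us)%:R * e.
Proof.
move=> mX mA; elim: us => [|v us IH] He; first by rewrite big_nil setI0 measure0 mul0r.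
have mXv : measurable (X `&` A v) by exact: measurableI.
have mXus : measurable (X `&` \big[setU/set0]_(u <- us) A u).
  by apply: measurableI => //; exact: bigsetU_measurable.
rewrite big_cons setIUr fine_measureU //= -add1n natrD mulrDl mul1r.
have := fine_ge0 (measure_ge0 P (X `&` A v `&` (X `&` \big[setU/set0]_(u <- us) A u))).
have := He v (mem_head _ _); have := IH (fun u us_u => He u (mem_behead (s := v :: us) us_u)).
lra.
Qed.

Lemma bonferroni_bigsetU (I : eqType) (us : seq I) (A : I -> set T) (e : R) :
  uniq us -> (forall u, measurable (A u)) -> 0 <= e ->
  (forall u v, u != v -> fine (P (A u `&` A v)) <= e) ->
  \sum_(u <- us) fine (P (A u)) - (size us)%:R ^+ 2 * e <=
    fine (P (\big[setU/set0]_(u <- us) A u)).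
Proof.
move=> + mA e0 He; elim: us => [|u us IH] /=.
  by rewrite !big_nil measure0 expr0n mul0r subr0.
move=> /andP[uN /IH {}IH]; rewrite !big_cons fine_measureU //; last first.
  exact: bigsetU_measurable.
have : fine (P (A u `&` \big[setU/set0]_(v <- us) A v)) <= (size us)%:R * e.
  apply: fine_measureI_bigsetU_le => // v vus; apply: He.
  by apply: contraNneq uN => ->.
have : 0 <= (size us)%:R * e by rewrite mulr_ge0.
rewrite -natr1 sqrrD1 => *; nra.
Qed.

End fine_measure.

Section offspring_law.
Context {R : realType} {dS : measure_display} {S : measurableType dS}.
Variables (Q : probability S R) (h : R * S -> R).
Local Open Scope ereal_scope.

Definition mark_offspring_prob (B : set S) (K : set nat) : \bar R :=
  \sum_(k <oo | k \in K) mark_offspring_law Q h B k.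

(* As in [mark_offspring_law], [fine] sends an infinite [kappa h a] to [0]. *)
Definition offspring_mean (a : S) : R := fine (kappa h a).

Definition offspring_pmf (k : nat) (a : S) : R :=
  expR (- offspring_mean a) * offspring_mean a ^+ k / k`!%:R.

Hypothesis mh : measurable_fun setT h.
Hypothesis h_ge0 : forall p, (0 <= h p)%R.

Lemma kappa_ge0 a : 0 <= kappa h a.
Proof. by apply: integral_ge0 => s _; rewrite lee_fin. Qed.

Lemma offspring_mean_ge0 a : (0 <= offspring_mean a)%R.
Proof. exact/fine_ge0/kappa_ge0. Qed.

Lemma offspring_pmf_ge0 k a : (0 <= offspring_pmf k a)%R.
Proof. by rewrite divr_ge0 // mulr_ge0 ?expR_ge0 // exprn_ge0 // offspring_mean_ge0. Qed.

Lemma measurable_kappa : measurable_fun setT (kappa h).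
Proof.
pose g (p : R * S) := (h p * \1_`[0%R, +oo[ p.1)%:E.
have -> : kappa h = fubini_G lebesgue_measure g.
  apply/funext => a; rewrite /kappa /fubini_G [LHS]integral_mkcond.
  by apply: eq_integral => s _; rewrite /g patchE indicE /=; case: ifPn; rewrite ?mulr1 ?mulr0.
apply: measurable_fun_fubini_tonelli_G => [|p]; last by rewrite lee_fin mulr_ge0.
apply/measurable_EFinP/measurable_funM => //.
apply: measurableT_comp => //; exact: measurable_indic.
Qed.

Lemma measurable_offspring_pmf k : measurable_fun setT (offspring_pmf k).
Proof.
have mmean : measurable_fun setT offspring_mean.
  exact: measurableT_comp (fine_measurable measurableT) measurable_kappa.
apply: measurable_funM => //; apply: measurable_funM; last exact: measurable_funX.
exact/measurableT_comp/measurable_funN.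
Qed.

Lemma mark_offspring_prob_setT B : measurable B -> mark_offspring_prob B setT = Q B.
Proof.
move=> mB; rewrite /mark_offspring_prob (eq_eseriesl (Q := xpredT)) => [|k]; last first.
  by rewrite in_setT.
rewrite -integral_nneseries => [|//|k|k a _]; last 2 first.
- exact/measurable_EFinP/measurable_funTS/measurable_offspring_pmf.
- by rewrite lee_fin offspring_pmf_ge0.
rewrite (eq_integral (cst 1)) ?integral_cst ?mul1e // => a _.
exact/nneseries_poisson/offspring_mean_ge0.
Qed.

(* [\sum_i P(N > i) = E N]: exchange the sums over [i < k] and [k]. *)
Lemma nneseries_mark_offspring_tail :
  \sum_(i <oo) mark_offspring_prob setT [set k | (i < k)%N] =
  \int[Q]_a (offspring_mean a)%:E.
Proof.
have tail_ge0 i k a : 0 <= ((if (i < k)%N then offspring_pmf k a else 0%R)%:E).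
  by case: ifP; rewrite lee_fin ?offspring_pmf_ge0.
have mtail i k : measurable_fun setT (fun a => (if (i < k)%N then offspring_pmf k a else 0%R)%:E).
  by case: (i < k)%N; [exact/measurable_EFinP/measurable_offspring_pmf|exact: measurable_cst].
have tailE i : mark_offspring_prob setT [set k | (i < k)%N] =
    \int[Q]_a \sum_(k <oo) ((if (i < k)%N then offspring_pmf k a else 0%R)%:E).
  rewrite integral_nneseries // /mark_offspring_prob eseries_mkcond.
  apply: eq_eseriesr => k _; rewrite (_ : (k \in _) = (i < k)%N); last first.
    by apply/idP/idP; rewrite inE.
  by case: ifP; rewrite ?integral0.
rewrite (eq_eseriesr (fun i _ => tailE i)) -integral_nneseries // => [|i|i a _]; last 2 first.
- exact: ge0_emeasurable_sum.
- exact: nneseries_ge0.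
apply: eq_integral => a _; rewrite nneseries_interchange //.
rewrite (eq_eseriesr (g := fun k => (k%:R * offspring_pmf k a)%:E)) => [|k _].
  exact/nneseries_poisson_mean/offspring_mean_ge0.
exact/nneseries_ltn_cst/offspring_pmf_ge0.
Qed.

Lemma integral_offspring_mean_le : \int[Q]_a (offspring_mean a)%:E <= \int[Q]_a kappa h a.
Proof.
apply: ge0_le_integral => // [a _|||a _]; first by rewrite lee_fin offspring_mean_ge0.
- exact/measurable_EFinP/measurableT_comp/measurable_kappa.
- exact: measurable_kappa.
by rewrite /offspring_mean; case: (kappa h a) (kappa_ge0 a).
Qed.

Lemma mark_offspring_law_ge0 B k : 0 <= mark_offspring_law Q h B k.
Proof. by apply: integral_ge0 => a _; rewrite lee_fin; exact: offspring_pmf_ge0. Qed.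

Definition offspring_tail (i : nat) : R :=
  fine (mark_offspring_prob setT [set k | (i < k)%N]).

Lemma offspring_tailE i :
  (offspring_tail i)%:E = mark_offspring_prob setT [set k | (i < k)%N].
Proof.
have law_ge0 k : 0 <= mark_offspring_law Q h setT k by exact: mark_offspring_law_ge0.
rewrite fineK // ge0_fin_numE; last by apply: nneseries_ge0 => k _ _.
apply: (le_lt_trans _ (ltry 1)); rewrite -(probability_setT Q) -mark_offspring_prob_setT //.
by apply: subset_lee_nneseries => // k; rewrite !inE.
Qed.

Lemma offspring_tail_ge0 i : (0 <= offspring_tail i)%R.
Proof.
by rewrite -lee_fin offspring_tailE nneseries_ge0 // => k _ _; exact: mark_offspring_law_ge0.
Qed.

Hypothesis kappa_lt1 : \int[Q]_a kappa h a < 1.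

Definition branching_ratio : R := fine (\int[Q]_a (offspring_mean a)%:E).

Lemma integral_offspring_mean_lt1 : \int[Q]_a (offspring_mean a)%:E < 1.
Proof. exact: le_lt_trans integral_offspring_mean_le kappa_lt1. Qed.

Lemma integral_offspring_meanE :
  \int[Q]_a (offspring_mean a)%:E = branching_ratio%:E.
Proof.
rewrite fineK // ge0_fin_numE ?(lt_trans integral_offspring_mean_lt1) ?ltry //.
by apply: integral_ge0 => a _; rewrite lee_fin offspring_mean_ge0.
Qed.

Lemma nneseries_offspring_tail :
  \sum_(i <oo) (offspring_tail i)%:E = branching_ratio%:E.
Proof.
under eq_eseriesr do rewrite offspring_tailE.
by rewrite nneseries_mark_offspring_tail // integral_offspring_meanE.
Qed.

Lemma branching_ratio_ge0 : (0 <= branching_ratio)%R.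
Proof.
by rewrite fine_ge0 // integral_ge0 // => a _; rewrite lee_fin offspring_mean_ge0.
Qed.

Lemma branching_ratio_lt1 : (branching_ratio < 1)%R.
Proof. by rewrite -lte_fin -integral_offspring_meanE integral_offspring_mean_lt1. Qed.

Lemma cvg_sum_exprn_offspring_tail :
  (fun D => \sum_(k < D) (\sum_(0 <= i < D) offspring_tail i) ^+ k)%R @ \oo -->
  (1 - branching_ratio)^-1%R.
Proof.
apply: cvg_sum_exprn_diag branching_ratio_lt1 _ => [D|].
  rewrite sumr_ge0 => [|i _]; last exact: offspring_tail_ge0.
  exact: partial_le_nneseries offspring_tail_ge0 nneseries_offspring_tail.
exact: cvg_nneseries_partial offspring_tail_ge0 nneseries_offspring_tail.
Qed.

End offspring_law.

Section generations.
Context {R : realType} {d : measure_display} {T : measurableType d}.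

(* Union and sum over the words of length [n], by recursion on the first letter
   so that only unions and series indexed by [nat] occur. *)
Fixpoint gen_bigcup (n : nat) (E : seq nat -> set T) : set T :=
  if n is n'.+1 then \bigcup_i gen_bigcup n' (fun v => E (i :: v)) else E [::].

Fixpoint gen_sum (n : nat) (g : seq nat -> \bar R) : \bar R :=
  if n is n'.+1 then \sum_(i <oo) gen_sum n' (fun v => g (i :: v)) else g [::].

Lemma gen_bigcupP n E w : gen_bigcup n E w <-> exists2 u, size u = n & E u w.
Proof.
elim: n E => [|n IH] E /=.
  by split=> [Ew|[[] // _ Ew]]; exists [::].
split=> [[i _ /IH[v <- Ew]]|[[|i v] // [vn] Ew]]; first by exists (i :: v).
by exists i => //; apply/IH; exists v.
Qed.

Lemma measurable_gen_bigcup n E : (forall u, measurable (E u)) ->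
  measurable (gen_bigcup n E).
Proof.
elim: n E => [|n IH] E mE //=.
by apply: bigcup_measurable => i _; apply: IH => u; exact: mE.
Qed.

Lemma measure_gen_bigcup_le (mu : measure T R) n E : (forall u, measurable (E u)) ->
  (mu (gen_bigcup n E) <= gen_sum n (mu \o E))%E.
Proof.
elim: n E => [|n IH] E mE //=.
have mF i : measurable (gen_bigcup n (fun v => E (i :: v))).
  by apply: measurable_gen_bigcup => u; exact: mE.
apply: le_trans (measure_sigma_subadditive mu mF (bigcup_measurable _) (@subset_refl _ _)) _.
  by move=> i _.
by apply: lee_nneseries => [i _ _|i _]; [exact: measure_ge0|exact: IH].
Qed.

Lemma gen_sum_prod (t : nat -> R) (m c : R) n :
  (forall i, 0 <= t i) -> (\sum_(i <oo) (t i)%:E = m%:E)%E -> 0 <= c ->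
  gen_sum n (fun u => (c * \prod_(i <- u) t i)%:E) = (c * m ^+ n)%:E.
Proof.
move=> t_ge0 tm; elim: n c => [|n IH] c c0 /=; first by rewrite big_nil mulr1.
under eq_eseriesr => i _.
  under eq_fun => v do rewrite big_cons mulrA.
  rewrite IH ?mulr_ge0 // mulrAC EFinM; over.
rewrite nneseriesZl => [|i _]; last by rewrite lee_fin.
by rewrite tm -EFinM exprSr mulrA.
Qed.

End generations.

Section labels.
Context {R : realType}.

Fixpoint labels (D n : nat) : seq (seq nat) :=
  if n is n'.+1 then [seq i :: v | i <- iota 0 D, v <- labels D n'] else [:: [::]].

Fixpoint labels_lt (D n : nat) : seq (seq nat) :=
  if n is n'.+1 then labels_lt D n' ++ labels D n' else [::].

Lemma size_labels D n u : u \in labels D n -> size u = n.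
Proof.
elim: n u => [|n IH] u /=; first by rewrite inE => /eqP ->.
by move=> /allpairsPdep[i [v [_ /IH <- ->]]].
Qed.

Lemma labels_uniq D n : uniq (labels D n).
Proof.
elim: n => [|n IH] //=; apply: allpairs_uniq => //; first exact: iota_uniq.
by move=> [i v] [j w] _ _ /= [-> ->].
Qed.

Lemma size_labels_lt D n u : u \in labels_lt D n -> (size u < n)%N.
Proof.
elim: n u => [|n IH] u //=; rewrite mem_cat => /orP[/IH/ltnW|/size_labels ->] //.
Qed.

Lemma labels_lt_uniq D n : uniq (labels_lt D n).
Proof.
elim: n => [|n IH] //=; rewrite cat_uniq IH labels_uniq andbT /=.
by apply/hasPn => u /size_labels un; apply/negP => /size_labels_lt; rewrite un ltnn.
Qed.

Lemma sum_prod_labels (t : nat -> R) D n :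
  \sum_(u <- labels D n) \prod_(i <- u) t i = (\sum_(0 <= i < D) t i) ^+ n.
Proof.
elim: n => [|n IH] /=; first by rewrite big_seq1 big_nil expr0.
rewrite big_allpairs_dep exprS -IH mulr_suml /index_iota subn0.
by apply: eq_bigr => i _; rewrite mulr_sumr; apply: eq_bigr => v _; rewrite big_cons.
Qed.

Lemma sum_prod_labels_lt (t : nat -> R) D n :
  \sum_(u <- labels_lt D n) \prod_(i <- u) t i = \sum_(k < n) (\sum_(0 <= i < D) t i) ^+ k.
Proof.
elim: n => [|n IH] /=; first by rewrite big_nil big_ord0.
by rewrite big_cat IH sum_prod_labels big_ord_recr.
Qed.

End labels.

Section cluster.
Context {R : realType} {dS : measure_display} {S : measurableType dS}.
Variables (Q : probability S R) (h : R * S -> R).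
Context {d : measure_display} {T : measurableType d}.
Variables (P : probability T R) (M : seq nat -> T -> S) (N : seq nat -> T -> nat).
Hypothesis mM : forall u, measurable_fun setT (M u).
Hypothesis mN : forall u k, measurable [set w | N u w = k].
Hypothesis iid : iid_cluster_family P Q h M N.
Hypothesis mh : measurable_fun setT h.
Hypothesis h_ge0 : forall p, (0 <= h p)%R.
Local Open Scope ereal_scope.
Hypothesis kappa_lt1 : \int[Q]_a kappa h a < 1.

Local Notation offspring_tail := (offspring_tail Q h).
Local Notation branching_ratio := (branching_ratio Q h).
Local Notation law := (mark_offspring_law Q h).

Definition rect_event (us : seq (seq nat)) (B : seq nat -> set S)
    (K : seq nat -> set nat) : set T :=
  \big[setI/setT]_(u <- us) [set w | B u (M u w) /\ K u (N u w)].

Lemma measurable_rect_event us B K : (forall u, measurable (B u)) ->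
  measurable (rect_event us B K).
Proof.
move=> mB; apply: bigsetI_measurable => u _.
rewrite (_ : [set w | _] = M u @^-1` B u `&` \bigcup_(k in K u) [set w | N u w = k]).
  apply: measurableI; last by apply: bigcup_measurable => k _; exact: mN.
  by rewrite -[_ @^-1` _]setTI; exact: mM.
apply/seteqP; split => w /= [Bw]; first by split => //; exists (N u w).
by move=> [k Kk ->].
Qed.

Lemma measure_rect_event_set1 us B k : uniq us -> (forall u, measurable (B u)) ->
  P (rect_event us B (fun u => [set k u])) = \prod_(u <- us) law (B u) (k u).
Proof. by move=> us_uniq mB; rewrite /rect_event -bigcap_seq; exact: iid. Qed.

Lemma eq_rect_event us B B' K K' : {in us, B =1 B'} -> {in us, K =1 K'} ->
  rect_event us B K = rect_event us B' K'.
Proof. by move=> BB' KK'; apply: eq_big_seq => u us_u; rewrite BB' ?KK'. Qed.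

Lemma rect_event_cons u us B K : rect_event (u :: us) B K =
  [set w | B u (M u w) /\ K u (N u w)] `&` rect_event us B K.
Proof. exact: big_cons. Qed.

Lemma rect_event_split a us vs B K k : a \notin vs ->
  rect_event (a :: us) B K `&` rect_event vs B (fun u => [set k u]) =
  \bigcup_(j in K a) (rect_event us B K `&`
    rect_event (a :: vs) B (fun u => [set if u == a then j else k u])).
Proof.
move=> a_vs; have Evs j : rect_event vs B (fun u => [set if u == a then j else k u]) =
    rect_event vs B (fun u => [set k u]).
  by apply: eq_rect_event => // u vs_u; case: eqP vs_u => // ->; rewrite (negbTE a_vs).
rewrite rect_event_cons; apply/seteqP; split => w /=.
  move=> [[[Ba Ka] Eus] Evs_w]; exists (N a w) => //.
  by rewrite rect_event_cons Evs eqxx.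
move=> [j Kj [Eus]]; rewrite rect_event_cons Evs eqxx => -[[Ba Nj] Evs_w].
by rewrite -Nj in Kj.
Qed.

(* Independence passes from exact offspring numbers to sets of them one label
   at a time, by summing over the offspring number of that label. *)
Lemma measure_rect_event_cat us vs B K k :
  uniq (us ++ vs) -> (forall u, measurable (B u)) ->
  P (rect_event us B K `&` rect_event vs B (fun u => [set k u])) =
  \prod_(u <- us) mark_offspring_prob Q h (B u) (K u) * \prod_(v <- vs) law (B v) (k v).
Proof.
elim: us vs k => [|a us IH] vs k; rewrite ?cat_cons => us_uniq mB.
  by rewrite /rect_event !big_nil setTI mul1e measure_rect_event_set1.
have /andP[a_usvs usvs_uniq] := us_uniq.
have a_vs : a \notin vs by move: a_usvs; rewrite mem_cat negb_or => /andP[].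
have usavs_uniq : uniq (us ++ a :: vs).
  by have /permPl/perm_uniq -> := perm_catCA us [:: a] vs; rewrite /= a_usvs.
pose ka j u := if u == a then j else k u.
have ka_vs j : {in vs, ka j =1 k}.
  by move=> u vs_u; rewrite /ka; case: eqP => // ua; rewrite -ua vs_u in a_vs.
have fin_us : \prod_(u <- us) mark_offspring_prob Q h (B u) (K u) \is a fin_num.
  have := IH [::] k; rewrite cats0 big_nil mule1 => <- //; last first.
    exact: subseq_uniq (prefix_subseq us vs) usvs_uniq.
  rewrite fin_num_measure //; apply: measurableI; exact: measurable_rect_event.
have fin_vs : \prod_(v <- vs) law (B v) (k v) \is a fin_num.
  rewrite -measure_rect_event_set1 ?fin_num_measure //; last first.
    exact: subseq_uniq (suffix_subseq us vs) usvs_uniq.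
  exact: measurable_rect_event.
rewrite rect_event_split // measure_bigcup; last 2 first.
- by move=> j _; apply: measurableI; exact: measurable_rect_event.
- move=> i j _ _ [w [[_ Ei] [_ Ej]]].
  by move: Ei Ej; rewrite !rect_event_cons eqxx => -[[_ <-] _] [[_ <-] _].
rewrite (eq_eseriesr (g := fun j => (fine (\prod_(u <- us) mark_offspring_prob Q h (B u) (K u))
    * fine (\prod_(v <- vs) law (B v) (k v)))%:E * law (B a) j)) => [|j _]; last first.
  have := IH (a :: vs) (ka j) usavs_uniq mB; rewrite /= => ->.
  rewrite big_cons /ka eqxx (eq_big_seq _ (fun u vs_u => congr1 _ (ka_vs j u vs_u))).
  by rewrite EFinM !fineK // muleCA muleC.
rewrite nneseriesZl => [|j _]; last exact: mark_offspring_law_ge0.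
by rewrite big_cons EFinM !fineK // muleC muleA.
Qed.

Lemma measure_rect_event us B K : uniq us -> (forall u, measurable (B u)) ->
  P (rect_event us B K) = \prod_(u <- us) mark_offspring_prob Q h (B u) (K u).
Proof.
move=> us_uniq mB; have := @measure_rect_event_cat us [::] B K (fun _ => 0%N).
by rewrite cats0 /rect_event big_nil setIT big_nil mule1; apply.
Qed.

Fixpoint ancestors (u : seq nat) : seq (seq nat) :=
  if u is _ :: v then v :: ancestors v else [::].

Lemma size_ancestors u v : v \in ancestors u -> (size v < size u)%N.
Proof.
elim: u => [|i u IH] //=; rewrite in_cons => /orP[/eqP -> //|/IH].
exact: ltnW.
Qed.

Lemma ancestors_uniq u : uniq (ancestors u).
Proof.
elim: u => [|i u IH] //=; rewrite IH andbT.
by apply/negP => /size_ancestors; rewrite ltnn.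
Qed.

Lemma notin_ancestors u : u \notin ancestors u.
Proof. by apply/negP => /size_ancestors; rewrite ltnn. Qed.

Lemma ancestors_neq u v : v \in ancestors u -> (v == u) = false.
Proof. by move=> /size_ancestors vu; apply/eqP => uv; rewrite uv ltnn in vu. Qed.

(* If [v] is an ancestor of [u], the next label on the path from [v] to [u] is
   [i :: v] with [i = nth 0 u (size u - (size v).+1)]; it belongs to the
   cluster iff [v] has more than [i] offspring. *)
Definition path_offspring (u v : seq nat) : set nat :=
  [set k | (nth 0 u (size u - (size v).+1) < k)%N].

Lemma path_offspring_cons i u v : v \in ancestors u ->
  path_offspring (i :: u) v = path_offspring u v.
Proof. by move=> /size_ancestors vu; rewrite /path_offspring /= subSn. Qed.

Lemma path_offspring_parent i u : path_offspring (i :: u) u = [set k | (i < k)%N].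
Proof. by rewrite /path_offspring /= subnn. Qed.

Lemma aliveE u :
  [set w | alive N w u] = rect_event (ancestors u) (fun _ => setT) (path_offspring u).
Proof.
elim: u => [|i u IH] /=; first by rewrite /rect_event big_nil; apply/seteqP; split.
rewrite rect_event_cons path_offspring_parent.
rewrite (@eq_rect_event _ _ (fun _ => setT) _ (path_offspring u)) //; last first.
  by move=> v /path_offspring_cons.
by rewrite -IH; apply/seteqP; split => w /= => [/andP[]|[[_ ?] ?]]; last apply/andP.
Qed.

Definition alive_mark_event (u : seq nat) (B : set S) : set T :=
  [set w | alive N w u /\ B (M u w)].

Lemma alive_mark_eventE u B : alive_mark_event u B =
  rect_event (u :: ancestors u) (fun v => if v == u then B else setT)
    (fun v => if v == u then setT else path_offspring u v).
Proof.
rewrite rect_event_cons eqxx (@eq_rect_event _ _ (fun _ => setT) _ (path_offspring u)).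
- by rewrite -aliveE; apply/seteqP; split => w /= => [[]|[[]]].
- by move=> v /ancestors_neq ->.
- by move=> v /ancestors_neq ->.
Qed.

Lemma measurable_alive_mark_event u B : measurable B -> measurable (alive_mark_event u B).
Proof. by move=> mB; rewrite alive_mark_eventE; apply: measurable_rect_event => v; case: ifP. Qed.

Lemma prod_path_offspring u :
  \prod_(v <- ancestors u) mark_offspring_prob Q h setT (path_offspring u v) =
  (\prod_(i <- u) offspring_tail i)%:E.
Proof.
elim: u => [|i u IH]; first by rewrite !big_nil.
rewrite /= !big_cons EFinM path_offspring_parent -offspring_tailE //.
by congr (_ * _); apply: etrans IH; apply: eq_big_seq => v /path_offspring_cons ->.
Qed.

Lemma measure_alive_mark_event u B : measurable B ->
  P (alive_mark_event u B) = Q B * (\prod_(i <- u) offspring_tail i)%:E.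
Proof.
move=> mB; rewrite alive_mark_eventE measure_rect_event /= ?notin_ancestors ?ancestors_uniq //;
  last by move=> v; case: ifP.
rewrite big_cons eqxx mark_offspring_prob_setT // -prod_path_offspring.
by congr (_ * _); apply: eq_big_seq => v /ancestors_neq ->.
Qed.

Lemma measure_alive_mark_eventI u v B : u != v -> measurable B ->
  P (alive_mark_event u B `&` alive_mark_event v B) <= Q B * Q B.
Proof.
move=> uv mB; have uv_uniq : uniq [:: u; v] by rewrite /= inE uv.
have := measure_rect_event _ (fun _ => B) (fun _ => setT) uv_uniq (fun _ => mB).
rewrite !big_cons big_nil mule1 !mark_offspring_prob_setT // => <-.
apply: le_measure; rewrite ?inE.
- by apply: measurableI; exact: measurable_alive_mark_event.
- exact: measurable_rect_event.
- by move=> w [[_ Bu] [_ Bv]]; rewrite /rect_event !big_cons big_nil.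
Qed.

Variable f : S -> R.
Hypothesis mf : measurable_fun setT f.

Definition claim_tail (t : R) : R := fine (Q [set a | t%:E < (f a)%:E]).
Definition cluster_max_tail (t : R) : R := fine (P [set w | t%:E < cluster_max f M N w]).

Lemma measurable_claim_gt (t : R) : measurable [set a | t%:E < (f a)%:E].
Proof.
have := mf measurableT _ (measurable_itv `]t, +oo[); rewrite setTI.
by congr measurable; apply/seteqP; split => a; rewrite /= in_itv /= andbT lte_fin.
Qed.

Lemma cluster_max_gtE (t : R) : [set w | t%:E < cluster_max f M N w] =
  \bigcup_n gen_bigcup n (fun u => alive_mark_event u [set a | t%:E < (f a)%:E]).
Proof.
apply/seteqP; split => w /=.
  move=> /ereal_sup_gt[_ [u /= u_alive <-] tf].
  by exists (size u) => //; apply/gen_bigcupP; exists u.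
move=> [n _ /gen_bigcupP[u _ [u_alive tf]]]; apply: lt_le_trans tf _.
by apply: ereal_sup_ubound; exists u.
Qed.

Lemma measurable_cluster_max_gt (t : R) : measurable [set w | t%:E < cluster_max f M N w].
Proof.
rewrite cluster_max_gtE; apply: bigcup_measurable => n _; apply: measurable_gen_bigcup => u.
exact/measurable_alive_mark_event/measurable_claim_gt.
Qed.

Lemma cluster_max_tail_le (t : R) :
  (cluster_max_tail t <= claim_tail t / (1 - branching_ratio))%R.
Proof.
pose B := [set a | t%:E < (f a)%:E].
have mB : measurable B := measurable_claim_gt t.
have mA u : measurable (alive_mark_event u B) by exact: measurable_alive_mark_event.
have mH := measurable_cluster_max_gt t.
rewrite /cluster_max_tail; set q := claim_tail t.
have q_ge0 : (0 <= q)%R by exact/fine_ge0/measure_ge0.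
rewrite -lee_fin fineK ?fin_num_measure //.
rewrite -nneseries_geometric ?branching_ratio_ge0 ?branching_ratio_lt1 //.
have PE : P \o (alive_mark_event ^~ B) = (fun u => (q * \prod_(i <- u) offspring_tail i)%:E).
  apply/funext => u /=; rewrite measure_alive_mark_event //.
  by rewrite EFinM /q fineK // fin_num_measure.
rewrite cluster_max_gtE; apply: le_trans (measure_sigma_subadditive P _ _ (@subset_refl _ _)) _.
- by move=> n; exact: measurable_gen_bigcup.
- by apply: bigcup_measurable => n _; exact: measurable_gen_bigcup.
apply: lee_nneseries => [n _ _|n _]; first exact: measure_ge0.
have := measure_gen_bigcup_le P n _ mA.
by rewrite PE (gen_sum_prod _ _ _ _ (offspring_tail_ge0 Q h mh h_ge0)
  (nneseries_offspring_tail Q h mh h_ge0 kappa_lt1)).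
Qed.

Lemma cluster_max_tail_ge (t : R) D :
  (claim_tail t * \sum_(k < D) (\sum_(0 <= i < D) offspring_tail i) ^+ k
     - (size (labels_lt D D))%:R ^+ 2 * claim_tail t ^+ 2 <= cluster_max_tail t)%R.
Proof.
pose B := [set a | t%:E < (f a)%:E].
have mB : measurable B := measurable_claim_gt t.
have mA u : measurable (alive_mark_event u B) by exact: measurable_alive_mark_event.
have Qfin : Q B \is a fin_num by rewrite fin_num_measure.
have sub : \big[setU/set0]_(u <- labels_lt D D) alive_mark_event u B
    `<=` [set w | t%:E < cluster_max f M N w].
  rewrite cluster_max_gtE -bigcup_seq => w [u _ Aw].
  by exists (size u) => //; apply/gen_bigcupP; exists u.
have pair_le u v : u != v ->
    (fine (P (alive_mark_event u B `&` alive_mark_event v B)) <= claim_tail t ^+ 2)%R.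
  move=> uv; rewrite expr2 -fineM // fine_le ?fin_numM ?fin_num_measure //.
    exact: measurableI.
  exact: measure_alive_mark_eventI.
apply: le_trans _ (fine_measure_le P _ _ (bigsetU_measurable _ (fun u _ => mA u))
  (measurable_cluster_max_gt t) sub).
apply: le_trans _ (bonferroni_bigsetU P _ _ _ _ (labels_lt_uniq D D) mA (sqr_ge0 _) pair_le).
rewrite lerD2r -sum_prod_labels_lt mulr_sumr le_eqVlt; apply/orP; left; apply/eqP.
by apply: eq_bigr => u _; rewrite measure_alive_mark_event // fineM.
Qed.

End cluster.

Theorem mainTheorem6 (R : realType)
  (dS : measure_display) (S : measurableType dS) (Q : probability S R)
  (f : S -> R) (nu : R) (h : R * S -> R)
  (d : measure_display) (T : measurableType d) (P : probability T R)
  (M : seq nat -> T -> S) (N : seq nat -> T -> nat) (G : R -> R) :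
  measurable_fun setT f -> (forall a, 0 <= f a) ->
  0 < nu ->
  measurable_fun setT h -> (forall p, 0 <= h p) ->
  (\int[Q]_a kappa h a < 1)%E ->
  (forall u, measurable_fun setT (M u)) ->
  (forall u k, measurable [set w | N u w = k]) ->
  iid_cluster_family P Q h M N ->
  is_EVD G ->
  in_MDA Q (fun a => (f a)%:E) G ->
  in_MDA P (cluster_max f M N) G.
Proof.
move=> mf _ _ mh h_ge0 kappa_lt1 mM mN iid G_EVD [a [b [a_gt0 X_MDA]]].
have c_gt0 : 0 < (1 - branching_ratio Q h)^-1.
  by rewrite invr_gt0 subr_gt0 (branching_ratio_lt1 Q h mh h_ge0 kappa_lt1).
have [al [be [al_gt0 G_stable]]] := EVD_max_stable _ _ G_EVD c_gt0.
exists (fun n => a n * al), (fun n => b n + a n * be); split => [n|x Ex].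
  exact: mulr_gt0.
have [Ey <-] := G_stable x Ex; set y := al * x + be in Ey *.
have shift n : a n * al * x + (b n + a n * be) = a n * y + b n by rewrite /y; ring.
under eq_fun do rewrite shift -/(cluster_max_tail P M N f _).
apply: (cvg_natmul_squeeze (fun n => claim_tail Q f (a n * y + b n)) _
  (fun D => \sum_(k < D) (\sum_(0 <= i < D) offspring_tail Q h i) ^+ k)
  (fun D => (size (labels_lt D D))%:R ^+ 2)).
- by move=> n; exact/fine_ge0/measure_ge0.
- move=> n; rewrite [leRHS]mulrC.
  exact: (cluster_max_tail_le _ _ _ _ _ mM mN iid mh h_ge0 kappa_lt1 _ mf).
- move=> D n; rewrite (mulrC (\sum_(k < D) _)).
  exact: (cluster_max_tail_ge _ _ _ _ _ mM mN iid mh h_ge0 _ mf).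
- exact: (cvg_sum_exprn_offspring_tail _ _ mh h_ge0 kappa_lt1).
- exact: X_MDA.
Qed.
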